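(* Let $G$ be a finitely generated group and $\mu$ a finitely supported symmetric non-degenerate probability measure on $G$. Let $h:G\to\mathbb{R}$ be a $\mu$-harmonic function of subexponential growth. Then for every element $\gamma$ of finite order in the FC-center $Z^{FC}(G)$ and every $x\in G$, one has $h(\gamma x)=h(x)$.
   Context: Non-degenerate means the support of $\mu$ generates $G$ as a semigroup. The FC-center $Z^{FC}(G)$ is the subgroup of elements with finite conjugacy class. $h$ is $\mu$-harmonic if $h(x)=\sum_g h(xg)\mu(g)$ for all $x$. With $M_h(n)=\max\{|h(x)|:d(e,x)\le n\}$ for a word metric $d$, $h$ has subexponential growth if $e^{-cn}M_h(n)\to0$ as $n\to\infty$ for every $c>0$. *)

From Stdlib Require Import Reals List.
Import ListNotations.
Open Scope R_scope.

Record Group := {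
  gcar :> Type;
  gmul : gcar -> gcar -> gcar;
  ginv : gcar -> gcar;
  gone : gcar;
  gassoc : forall a b c, gmul a (gmul b c) = gmul (gmul a b) c;
  gone_l : forall a, gmul gone a = a;
  gone_r : forall a, gmul a gone = a;
  ginv_l : forall a, gmul (ginv a) a = gone;
  ginv_r : forall a, gmul a (ginv a) = gone
}.

Arguments gmul {g} _ _.
Arguments ginv {g} _.
Arguments gone {g}.

Definition prodw {G : Group} (w : list G) : G := fold_right gmul gone w.

Fixpoint gpow {G : Group} (g : G) (n : nat) : G :=
  match n with O => gone | S k => gmul g (gpow g k) end.

Definition gens {G : Group} (S : list G) : list G := S ++ map ginv S.

Definition generates {G : Group} (S : list G) : Prop :=
  forall x : G, exists w : list G, Forall (fun s => In s (gens S)) w /\ x = prodw w.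

Fixpoint words_len {T : Type} (A : list T) (n : nat) : list (list T) :=
  match n with
  | O => [nil]
  | S k => flat_map (fun a => map (cons a) (words_len A k)) A
  end.
Definition words_upto {T : Type} (A : list T) (n : nat) : list (list T) :=
  flat_map (words_len A) (seq 0 (S n)).

(* M_h(n) = max { |h x| : d_S(e,x) <= n } for the word metric of S;
   the ball of radius n is the set of products of words of length <= n over S ∪ S^{-1}. *)
Definition Mh {G : Group} (S : list G) (h : G -> R) (n : nat) : R :=
  fold_right Rmax 0 (map (fun w => Rabs (h (prodw w))) (words_upto (gens S) n)).

Definition subexp_growth {G : Group} (S : list G) (h : G -> R) : Prop :=
  forall c : R, 0 < c -> Un_cv (fun n => exp (- c * INR n) * Mh S h n) 0.

Definition fin_prob {G : Group} (mu : G -> R) (supp : list G) : Prop :=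
  NoDup supp /\ (forall g, 0 <= mu g) /\ (forall g, mu g <> 0 -> In g supp) /\
  fold_right Rplus 0 (map mu supp) = 1.

Definition symmetric_meas {G : Group} (mu : G -> R) : Prop :=
  forall g, mu (ginv g) = mu g.

(* the support of mu generates G as a semigroup *)
Definition nondegenerate {G : Group} (mu : G -> R) : Prop :=
  forall x : G, exists w : list G, w <> nil /\ Forall (fun g => mu g <> 0) w /\ x = prodw w.

Definition harmonic {G : Group} (mu : G -> R) (supp : list G) (h : G -> R) : Prop :=
  forall x : G, h x = fold_right Rplus 0 (map (fun g => h (gmul x g) * mu g) supp).

(* FC-center: finite conjugacy class *)
Definition in_FC_center {G : Group} (g : G) : Prop :=
  exists L : list G, forall y : G, In (gmul (ginv y) (gmul g y)) L.

Definition finite_order {G : Group} (g : G) : Prop :=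
  exists n : nat, (0 < n)%nat /\ gpow g n = gone.

From Stdlib Require Import Reals List Lia Lra.
Import ListNotations.
Open Scope R_scope.

(* Put f(y) = h(gamma y) - h(y) and let P be the Markov operator of mu. Since the walk
   moves by right multiplication, f is harmonic again, so P^j(f^2) = f^2 + sum_{i<j} P^i(E f)
   increases in j, where E f is the mu-averaged squared gradient of f. As gamma has finite
   order k, f sums to zero along x, gamma x, ..., gamma^(k-1) x; as gamma lies in the FC-center,
   each gamma^i x = x (x^-1 gamma^i x) is reached from x by a walk path of length at most L
   and probability at least m0 > 0, uniformly in x. Comparing f(x) with f along these paths
   gives the reverse Poincare inequality P^L(f^2) >= (1 + m0 / L^2) f^2, so P^(mL)(f^2)(x)
   grows exponentially in m. But it is at most 4 M_h(n + mLr)^2, which grows subexponentially;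
   hence f(x) = 0. *)

Definition lsum {T : Type} (l : list T) (F : T -> R) : R := fold_right Rplus 0 (map F l).

Lemma lsum_le {T : Type} (l : list T) (F H : T -> R) :
  (forall t, In t l -> F t <= H t) -> lsum l F <= lsum l H.
Proof.
  unfold lsum; induction l as [|a l IH]; simpl; intros Hle; [lra|].
  assert (F a <= H a) by auto.
  assert (fold_right Rplus 0 (map F l) <= fold_right Rplus 0 (map H l)) by auto.
  lra.
Qed.

Lemma lsum_nonneg {T : Type} (l : list T) (F : T -> R) :
  (forall t, In t l -> 0 <= F t) -> 0 <= lsum l F.
Proof.
  unfold lsum; induction l as [|a l IH]; simpl; intros Hpos; [lra|].
  assert (0 <= F a) by auto.
  assert (0 <= fold_right Rplus 0 (map F l)) by auto.
  lra.
Qed.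

Lemma lsum_ge_term {T : Type} (l : list T) (F : T -> R) (t : T) :
  (forall u, In u l -> 0 <= F u) -> In t l -> F t <= lsum l F.
Proof.
  induction l as [|a l IH]; simpl; intros Hpos Ht; [contradiction|].
  assert (0 <= lsum l F) by (apply lsum_nonneg; auto).
  assert (0 <= F a) by auto.
  change (F t <= F a + lsum l F).
  destruct Ht as [<-|Ht]; [lra|].
  assert (F t <= lsum l F) by auto.
  lra.
Qed.

Lemma lsum_ext {T : Type} (l : list T) (F H : T -> R) :
  (forall t, F t = H t) -> lsum l F = lsum l H.
Proof. intros E; unfold lsum; induction l; simpl; [|rewrite IHl, E]; reflexivity. Qed.

Lemma lsum_plus {T : Type} (l : list T) (F H : T -> R) :
  lsum l (fun t => F t + H t) = lsum l F + lsum l H.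
Proof. unfold lsum; induction l; simpl; [|rewrite IHl]; ring. Qed.

Lemma lsum_scal {T : Type} (l : list T) (c : R) (F : T -> R) :
  lsum l (fun t => c * F t) = c * lsum l F.
Proof. unfold lsum; induction l; simpl; [|rewrite IHl]; ring. Qed.

Fixpoint sum_lt (n : nat) (F : nat -> R) : R :=
  match n with O => 0 | S n' => sum_lt n' F + F n' end.

Lemma sum_lt_ext (n : nat) (F H : nat -> R) :
  (forall i, F i = H i) -> sum_lt n F = sum_lt n H.
Proof. intros E; induction n; simpl; [|rewrite IHn, E]; reflexivity. Qed.

Lemma sum_lt_telescope (n : nat) (F : nat -> R) :
  sum_lt n (fun i => F (S i) - F i) = F n - F O.
Proof. induction n; simpl; [|rewrite IHn]; ring. Qed.

Lemma sum_lt_deviation (n : nat) (F : nat -> R) (a c : R) :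
  (forall i, (i < n)%nat -> Rabs (a - F i) <= c) ->
  Rabs (INR n * a - sum_lt n F) <= INR n * c.
Proof.
  induction n as [|n IH]; intros Hdev.
  - simpl; rewrite Rmult_0_l, Rminus_0_r, Rabs_R0; lra.
  - rewrite S_INR; cbn [sum_lt].
    replace ((INR n + 1) * a - (sum_lt n F + F n))
      with ((INR n * a - sum_lt n F) + (a - F n)) by ring.
    eapply Rle_trans; [apply Rabs_triang|].
    assert (Rabs (INR n * a - sum_lt n F) <= INR n * c) by (apply IH; auto).
    assert (Rabs (a - F n) <= c) by auto.
    lra.
Qed.

Lemma abs_le_of_sum_lt_zero (n : nat) (F : nat -> R) (a c : R) :
  (0 < n)%nat -> sum_lt n F = 0 ->
  (forall i, (i < n)%nat -> Rabs (a - F i) <= c) -> Rabs a <= c.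
Proof.
  intros Hn Hsum Hdev.
  assert (Hn' : 0 < INR n) by (apply lt_0_INR; exact Hn).
  pose proof (sum_lt_deviation n F a c Hdev) as Hbound.
  rewrite Hsum, Rminus_0_r, Rabs_mult, (Rabs_right (INR n)) in Hbound by lra.
  apply Rmult_le_reg_l with (INR n); assumption.
Qed.

Lemma max_list_ge {T : Type} (l : list T) (F : T -> R) (t : T) :
  In t l -> F t <= fold_right Rmax 0 (map F l).
Proof.
  induction l as [|a l IH]; simpl; [tauto|].
  intros [<-|Ht]; [apply Rmax_l|].
  eapply Rle_trans; [apply IH; exact Ht|apply Rmax_r].
Qed.

Lemma exists_uniform_witnesses {A B : Type} (P : A -> B -> Prop)
  (size : B -> nat) (weight : B -> R) (l : list A) :
  (forall y, In y l -> exists w, P y w /\ 0 < weight w) ->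
  exists N m, 0 < m /\
    forall y, In y l -> exists w, P y w /\ (size w <= N)%nat /\ m <= weight w.
Proof.
  induction l as [|a l IH]; intros Hwit.
  - exists O, 1; split; [lra|]; intros y [].
  - destruct IH as [N [m [Hm HN]]]; [intros y Hy; apply Hwit; now right|].
    destruct (Hwit a) as [wa [Ha Hwa]]; [now left|].
    exists (Nat.max N (size wa)), (Rmin m (weight wa)); split; [now apply Rmin_pos|].
    intros y [<-|Hy].
    + exists wa; repeat split; [exact Ha|lia|apply Rmin_r].
    + destruct (HN y Hy) as [w [Hw [Hsize Hweight]]].
      exists w; repeat split; [exact Hw|lia|].
      eapply Rle_trans; [apply Rmin_l|exact Hweight].
Qed.

Lemma prodw_cons {G : Group} (g : G) (w : list G) : prodw (g :: w) = gmul g (prodw w).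
Proof. reflexivity. Qed.

Lemma prodw_app {G : Group} (u v : list G) : prodw (u ++ v) = gmul (prodw u) (prodw v).
Proof.
  induction u as [|g u IH]; simpl.
  - now rewrite gone_l.
  - change (gmul g (prodw (u ++ v)) = gmul (gmul g (prodw u)) (prodw v)).
    now rewrite IH, gassoc.
Qed.

Lemma prodw_rcons {G : Group} (x : G) (w : list G) (g : G) :
  gmul x (prodw (w ++ [g])) = gmul (gmul x (prodw w)) g.
Proof. now rewrite prodw_app, prodw_cons, gone_r, gassoc. Qed.

Lemma conj_gpow {G : Group} (g x : G) (i : nat) :
  gmul (ginv x) (gmul (gpow g i) x) = gpow (gmul (ginv x) (gmul g x)) i.
Proof.
  induction i as [|i IH]; simpl.
  - now rewrite gone_l, ginv_l.
  - rewrite <- IH, !gassoc.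
    now rewrite <- (gassoc _ _ x (ginv x)), ginv_r, gone_r.
Qed.

Definition in_ball {G : Group} (S : list G) (n : nat) (y : G) : Prop :=
  exists w, Forall (fun s => In s (gens S)) w /\ (length w <= n)%nat /\ y = prodw w.

Lemma in_ball_le {G : Group} (S : list G) (m n : nat) (y : G) :
  (m <= n)%nat -> in_ball S m y -> in_ball S n y.
Proof. intros Hmn [w [Hw [Hlen Hy]]]; exists w; repeat split; auto; lia. Qed.

Lemma in_ball_mul {G : Group} (S : list G) (m n : nat) (y z : G) :
  in_ball S m y -> in_ball S n z -> in_ball S (m + n) (gmul y z).
Proof.
  intros [u [Hu [Hlu ->]]] [v [Hv [Hlv ->]]].
  exists (u ++ v); repeat split.
  - now apply Forall_app.
  - rewrite length_app; lia.
  - now rewrite prodw_app.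
Qed.

Lemma generates_in_ball {G : Group} (S : list G) (l : list G) :
  generates S -> exists r, forall y, In y l -> in_ball S r y.
Proof.
  intros Hgen; induction l as [|a l [r Hr]].
  - exists O; intros y [].
  - destruct (Hgen a) as [wa [Hwa Ha]].
    exists (Nat.max r (length wa)); intros y [<-|Hy].
    + exists wa; repeat split; auto; lia.
    + apply in_ball_le with r; [lia|auto].
Qed.

Lemma words_len_In {T : Type} (A : list T) (w : list T) :
  Forall (fun s => In s A) w -> In w (words_len A (length w)).
Proof.
  induction 1 as [|a w Ha Hw IH]; simpl; [now left|].
  apply in_flat_map; exists a; split; [exact Ha|now apply in_map].
Qed.

Lemma abs_le_Mh {G : Group} (S : list G) (h : G -> R) (n : nat) (y : G) :
  in_ball S n y -> Rabs (h y) <= Mh S h n.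
Proof.
  intros [w [Hw [Hlen ->]]].
  apply (max_list_ge _ (fun w => Rabs (h (prodw w)))).
  apply in_flat_map; exists (length w); split.
  - apply in_seq; lia.
  - now apply words_len_In.
Qed.

Lemma shift_diff_sq_le_Mh {G : Group} (S : list G) (h : G -> R) (gamma z : G) (r n : nat) :
  in_ball S r gamma -> in_ball S n z ->
  (h (gmul gamma z) - h z) ^ 2 <= 4 * Mh S h (r + n) ^ 2.
Proof.
  intros Hgamma Hz.
  assert (H1 : Rabs (h (gmul gamma z)) <= Mh S h (r + n))
    by (apply abs_le_Mh, in_ball_mul; assumption).
  assert (H2 : Rabs (h z) <= Mh S h (r + n))
    by (apply abs_le_Mh, in_ball_le with n; [lia|assumption]).
  assert (H3 : Rabs (h (gmul gamma z) - h z) <= 2 * Mh S h (r + n)).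
  { unfold Rminus; eapply Rle_trans; [apply Rabs_triang|]; rewrite Rabs_Ropp; lra. }
  rewrite <- pow2_abs.
  replace (4 * Mh S h (r + n) ^ 2) with ((2 * Mh S h (r + n)) ^ 2) by ring.
  apply pow_incr; split; [apply Rabs_pos|exact H3].
Qed.

Definition support_word {G : Group} (mu : G -> R) (w : list G) : Prop :=
  Forall (fun g => mu g <> 0) w.

Fixpoint word_weight {G : Group} (mu : G -> R) (w : list G) : R :=
  match w with [] => 1 | g :: w' => mu g * word_weight mu w' end.

Lemma word_weight_app {G : Group} (mu : G -> R) (u v : list G) :
  word_weight mu (u ++ v) = word_weight mu u * word_weight mu v.
Proof. induction u; simpl; [|rewrite IHu]; ring. Qed.

Lemma harmonic_shift_diff {G : Group} (mu : G -> R) (supp : list G) (h : G -> R) (gamma : G) :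
  harmonic mu supp h -> harmonic mu supp (fun y => h (gmul gamma y) - h y).
Proof.
  intros Hh x; rewrite (Hh (gmul gamma x)), (Hh x); clear Hh.
  induction supp as [|g l IH]; simpl; [ring|].
  rewrite <- IH, <- (gassoc _ gamma x g); ring.
Qed.

Lemma orbit_sum_shift_diff {G : Group} (h : G -> R) (gamma x : G) (k : nat) :
  gpow gamma k = gone ->
  sum_lt k (fun i => h (gmul gamma (gmul (gpow gamma i) x)) - h (gmul (gpow gamma i) x)) = 0.
Proof.
  intros Hk.
  rewrite (sum_lt_ext _ _ (fun i => h (gmul (gpow gamma (S i)) x) - h (gmul (gpow gamma i) x)))
    by (intros i; cbn [gpow]; now rewrite gassoc).
  rewrite (sum_lt_telescope k (fun i => h (gmul (gpow gamma i) x))), Hk; cbn [gpow].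
  rewrite gone_l; ring.
Qed.

Section MarkovOperator.

Context {G : Group} (mu : G -> R) (supp : list G).
Hypothesis mu_ge0 : forall g, 0 <= mu g.
Hypothesis supp_covers : forall g, mu g <> 0 -> In g supp.
Hypothesis mu_mass1 : lsum supp mu = 1.

Lemma mu_le1 (g : G) : mu g <= 1.
Proof.
  destruct (Req_dec (mu g) 0) as [->|Hg]; [lra|].
  rewrite <- mu_mass1; apply lsum_ge_term; auto.
Qed.

Lemma word_weight_nonneg (w : list G) : 0 <= word_weight mu w.
Proof. induction w; simpl; [lra|]; now apply Rmult_le_pos. Qed.

Lemma word_weight_pos (w : list G) : support_word mu w -> 0 < word_weight mu w.
Proof.
  induction 1 as [|g w Hg Hw IH]; simpl; [lra|].
  apply Rmult_lt_0_compat; [|exact IH].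
  destruct (mu_ge0 g); [assumption|congruence].
Qed.

Definition markov (phi : G -> R) (x : G) : R := lsum supp (fun g => phi (gmul x g) * mu g).

Definition markov_iter (n : nat) (phi : G -> R) : G -> R := Nat.iter n markov phi.

Lemma markov_iter_S (n : nat) (phi : G -> R) :
  markov_iter (S n) phi = markov (markov_iter n phi).
Proof. reflexivity. Qed.

Lemma markov_iter_S_r (n : nat) (phi : G -> R) :
  markov_iter (S n) phi = markov_iter n (markov phi).
Proof. apply Nat.iter_succ_r. Qed.

Lemma markov_iter_add (m n : nat) (phi : G -> R) :
  markov_iter (m + n) phi = markov_iter m (markov_iter n phi).
Proof. apply Nat.iter_add. Qed.

Lemma harmonic_markov (f : G -> R) (x : G) : harmonic mu supp f -> markov f x = f x.
Proof. intros Hf; symmetry; apply Hf. Qed.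

Lemma markov_iter_ext (n : nat) (phi psi : G -> R) (x : G) :
  (forall y, phi y = psi y) -> markov_iter n phi x = markov_iter n psi x.
Proof.
  intros E; revert x; induction n as [|n IH]; intros x; [apply E|].
  rewrite !markov_iter_S; apply lsum_ext; intros g; now rewrite IH.
Qed.

Lemma markov_iter_plus (n : nat) (phi psi : G -> R) (x : G) :
  markov_iter n (fun y => phi y + psi y) x = markov_iter n phi x + markov_iter n psi x.
Proof.
  revert x; induction n as [|n IH]; intros x; [reflexivity|].
  rewrite !markov_iter_S; unfold markov; rewrite <- lsum_plus.
  apply lsum_ext; intros g; rewrite IH; ring.
Qed.

Lemma markov_iter_scal (n : nat) (c : R) (phi : G -> R) (x : G) :
  markov_iter n (fun y => c * phi y) x = c * markov_iter n phi x.
Proof.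
  revert x; induction n as [|n IH]; intros x; [reflexivity|].
  rewrite !markov_iter_S; unfold markov; rewrite <- lsum_scal.
  apply lsum_ext; intros g; rewrite IH; ring.
Qed.

Lemma markov_iter_mono (n : nat) (phi psi : G -> R) (x : G) :
  (forall y, phi y <= psi y) -> markov_iter n phi x <= markov_iter n psi x.
Proof.
  intros Hle; revert x; induction n as [|n IH]; intros x; [apply Hle|].
  rewrite !markov_iter_S; apply lsum_le; intros g _.
  apply Rmult_le_compat_r; auto.
Qed.

Lemma markov_iter_nonneg (n : nat) (phi : G -> R) (x : G) :
  (forall y, 0 <= phi y) -> 0 <= markov_iter n phi x.
Proof.
  intros Hpos; revert x; induction n as [|n IH]; intros x; [apply Hpos|].
  rewrite markov_iter_S; apply lsum_nonneg; intros g _.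
  now apply Rmult_le_pos.
Qed.

Lemma markov_le (phi : G -> R) (x : G) (c : R) :
  (forall g, In g supp -> phi (gmul x g) <= c) -> markov phi x <= c.
Proof.
  intros Hle; apply Rle_trans with (lsum supp (fun g => c * mu g)).
  - apply lsum_le; intros g Hg; apply Rmult_le_compat_r; auto.
  - rewrite lsum_scal; change (lsum supp (fun g => mu g)) with (lsum supp mu).
    rewrite mu_mass1; lra.
Qed.

Lemma markov_ge_term (phi : G -> R) (x g : G) :
  (forall y, 0 <= phi y) -> mu g <> 0 -> phi (gmul x g) * mu g <= markov phi x.
Proof.
  intros Hpos Hg; apply (lsum_ge_term _ (fun g => phi (gmul x g) * mu g)); auto.
  intros u _; now apply Rmult_le_pos.
Qed.

Lemma markov_iter_ge_word (phi : G -> R) (u : list G) (x : G) :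
  (forall y, 0 <= phi y) -> support_word mu u ->
  word_weight mu u * phi (gmul x (prodw u)) <= markov_iter (length u) phi x.
Proof.
  intros Hpos Hu; revert x; induction Hu as [|g u Hg Hu IH]; intros x.
  - cbn; rewrite gone_r; lra.
  - cbn [length word_weight]; rewrite prodw_cons, gassoc, markov_iter_S.
    apply Rle_trans with (markov_iter (length u) phi (gmul x g) * mu g).
    + specialize (IH (gmul x g)); specialize (mu_ge0 g); nra.
    + apply markov_ge_term; [intros; now apply markov_iter_nonneg|exact Hg].
Qed.

Lemma markov_iter_geometric (phi : G -> R) (a : R) (L : nat) :
  0 <= a -> (forall y, a * phi y <= markov_iter L phi y) ->
  forall m x, a ^ m * phi x <= markov_iter (m * L) phi x.
Proof.
  intros Ha Hstep m; induction m as [|m IH]; intros x; [cbn; lra|].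
  rewrite Nat.mul_succ_l, markov_iter_add.
  apply Rle_trans with (markov_iter (m * L) (fun y => a * phi y) x).
  - rewrite markov_iter_scal; specialize (IH x); cbn [pow]; nra.
  - now apply markov_iter_mono.
Qed.

Lemma markov_iter_le_ball (S : list G) (r : nat) (phi : G -> R) (c : R) :
  (forall g, In g supp -> in_ball S r g) ->
  forall n N y, in_ball S N y ->
  (forall z, in_ball S (N + n * r) z -> phi z <= c) -> markov_iter n phi y <= c.
Proof.
  intros Hsupp n; induction n as [|n IH]; intros N y Hy Hphi.
  - apply Hphi; eapply in_ball_le; [|exact Hy]; lia.
  - rewrite markov_iter_S; apply markov_le; intros g Hg.
    apply IH with (N + r)%nat; [apply in_ball_mul; auto|].
    intros z Hz; apply Hphi; eapply in_ball_le; [|exact Hz]; lia.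
Qed.

Lemma markov_iter_shift_diff_sq_le_Mh (S : list G) (h : G -> R) (gamma x : G) (r r0 N j : nat) :
  (forall g, In g supp -> in_ball S r g) -> in_ball S r0 gamma -> in_ball S N x ->
  markov_iter j (fun z => (h (gmul gamma z) - h z) ^ 2) x <= 4 * Mh S h (r0 + (N + j * r)) ^ 2.
Proof.
  intros Hsupp Hgamma Hx; apply markov_iter_le_ball with S r N; auto.
  intros z Hz; now apply shift_diff_sq_le_Mh.
Qed.

Definition energy (f : G -> R) (y : G) : R :=
  lsum supp (fun g => (f (gmul y g) - f y) ^ 2 * mu g).

Lemma energy_nonneg (f : G -> R) (y : G) : 0 <= energy f y.
Proof. apply lsum_nonneg; intros g _; apply Rmult_le_pos; [apply pow2_ge_0|auto]. Qed.

Lemma energy_ge_term (f : G -> R) (y g : G) :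
  mu g <> 0 -> (f (gmul y g) - f y) ^ 2 * mu g <= energy f y.
Proof.
  intros Hg; apply (lsum_ge_term _ (fun g => (f (gmul y g) - f y) ^ 2 * mu g)); auto.
  intros u _; apply Rmult_le_pos; [apply pow2_ge_0|auto].
Qed.

Lemma markov_sq_harmonic (f : G -> R) (y : G) :
  harmonic mu supp f -> markov (fun z => f z ^ 2) y = f y ^ 2 + energy f y.
Proof.
  intros Hf; unfold energy.
  rewrite (lsum_ext _ _ (fun g => (f (gmul y g) ^ 2 * mu g
                                   + (- 2 * f y) * (f (gmul y g) * mu g))
                                   + f y ^ 2 * mu g)) by (intros g; ring).
  rewrite !lsum_plus, !lsum_scal.
  change (lsum supp (fun g => f (gmul y g) * mu g)) with (markov f y).
  change (lsum supp (fun g => mu g)) with (lsum supp mu).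
  rewrite (harmonic_markov f y Hf), mu_mass1.
  unfold markov; ring.
Qed.

Lemma markov_iter_sq_S (f : G -> R) (j : nat) (x : G) :
  harmonic mu supp f ->
  markov_iter (S j) (fun z => f z ^ 2) x
  = markov_iter j (fun z => f z ^ 2) x + markov_iter j (energy f) x.
Proof.
  intros Hf; rewrite markov_iter_S_r.
  rewrite <- markov_iter_plus; apply markov_iter_ext; intros y.
  now apply markov_sq_harmonic.
Qed.

Lemma markov_iter_sq_mono (f : G -> R) (j j' : nat) (x : G) :
  harmonic mu supp f -> (j <= j')%nat ->
  markov_iter j (fun z => f z ^ 2) x <= markov_iter j' (fun z => f z ^ 2) x.
Proof.
  intros Hf; induction 1 as [|j' _ IH]; [lra|].
  rewrite markov_iter_sq_S by exact Hf.
  pose proof (markov_iter_nonneg j' (energy f) x (energy_nonneg f)); lra.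
Qed.

(* P^(|u|+1)(f^2) - P^|u|(f^2) = P^|u|(E f) dominates the contribution of the path u g. *)
Lemma energy_step_le_increment (f : G -> R) (L : nat) (x : G) (u : list G) (g : G) :
  harmonic mu supp f -> support_word mu u -> mu g <> 0 -> (length u < L)%nat ->
  word_weight mu (u ++ [g]) * (f (gmul (gmul x (prodw u)) g) - f (gmul x (prodw u))) ^ 2
  <= markov_iter L (fun z => f z ^ 2) x - f x ^ 2.
Proof.
  intros Hf Hu Hg HL.
  set (y := gmul x (prodw u)).
  pose proof (markov_iter_ge_word (energy f) u x (energy_nonneg f) Hu) as Hword.
  pose proof (energy_ge_term f y g Hg) as Hterm.
  pose proof (markov_iter_sq_S f (length u) x Hf) as Hsucc.
  pose proof (markov_iter_sq_mono f (S (length u)) L x Hf HL) as Hupper.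
  pose proof (markov_iter_sq_mono f 0 (length u) x Hf (Nat.le_0_l _)) as Hlower.
  pose proof (word_weight_nonneg u) as Hweight.
  change (markov_iter 0 (fun z => f z ^ 2) x) with (f x ^ 2) in Hlower.
  rewrite word_weight_app; cbn [word_weight].
  fold y in Hword.
  nra.
Qed.

Lemma harmonic_path_bound (f : G -> R) (L : nat) (m0 : R) (x : G) (w : list G) :
  harmonic mu supp f -> 0 < m0 ->
  support_word mu w -> (length w <= L)%nat -> m0 <= word_weight mu w ->
  Rabs (f (gmul x (prodw w)) - f x)
  <= INR (length w) * sqrt ((markov_iter L (fun z => f z ^ 2) x - f x ^ 2) / m0).
Proof.
  intros Hf Hm0.
  set (D := markov_iter L (fun z => f z ^ 2) x - f x ^ 2).
  induction w as [|g w IH] using rev_ind; intros Hw Hlen Hweight.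
  - cbn; rewrite gone_r, Rminus_diag, Rabs_R0; lra.
  - apply Forall_app in Hw as [Hw Hg]; inversion_clear Hg as [|? ? Hg' _]; rename Hg' into Hg.
    rewrite length_app in Hlen; cbn [length] in Hlen.
    pose proof (word_weight_nonneg w) as Hw0.
    pose proof (mu_le1 g) as Hg1.
    pose proof (mu_ge0 g) as Hg0.
    assert (Hww : word_weight mu (w ++ [g]) = word_weight mu w * mu g)
      by (rewrite word_weight_app; cbn; ring).
    assert (Hprefix : m0 <= word_weight mu w) by nra.
    set (y := gmul x (prodw w)).
    assert (Hstep : Rabs (f (gmul y g) - f y) <= sqrt (D / m0)).
    { pose proof (energy_step_le_increment f L x w g Hf Hw Hg ltac:(lia)) as Hinc.
      fold y D in Hinc.
      rewrite <- sqrt_Rsqr_abs, Rsqr_pow2; apply sqrt_le_1_alt.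
      apply Rmult_le_reg_l with m0; [exact Hm0|].
      replace (m0 * (D / m0)) with D by (field; lra).
      pose proof (pow2_ge_0 (f (gmul y g) - f y)); nra. }
    rewrite prodw_rcons, length_app, plus_INR; fold y; cbn [length INR].
    replace (f (gmul y g) - f x) with ((f (gmul y g) - f y) + (f y - f x)) by ring.
    eapply Rle_trans; [apply Rabs_triang|].
    pose proof (IH Hw ltac:(lia) Hprefix) as Hprev; fold y in Hprev; lra.
Qed.

Lemma reverse_poincare (f : G -> R) (k L : nat) (m0 : R) (x : G) (y : nat -> G) :
  harmonic mu supp f -> (0 < k)%nat -> (0 < L)%nat -> 0 < m0 ->
  sum_lt k (fun i => f (y i)) = 0 ->
  (forall i, (i < k)%nat -> exists w, support_word mu w /\ y i = gmul x (prodw w) /\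
     (length w <= L)%nat /\ m0 <= word_weight mu w) ->
  (1 + m0 / INR L ^ 2) * f x ^ 2 <= markov_iter L (fun z => f z ^ 2) x.
Proof.
  intros Hf Hk HL Hm0 Hsum Hpaths.
  set (D := markov_iter L (fun z => f z ^ 2) x - f x ^ 2).
  assert (HD : 0 <= D)
    by (pose proof (markov_iter_sq_mono f 0 L x Hf (Nat.le_0_l _)); unfold D; cbn in *; lra).
  assert (HL' : 0 < INR L) by (apply lt_0_INR; exact HL).
  assert (Hclose : forall i, (i < k)%nat -> Rabs (f x - f (y i)) <= INR L * sqrt (D / m0)).
  { intros i Hi; destruct (Hpaths i Hi) as [w [Hw [-> [Hlen Hweight]]]].
    rewrite Rabs_minus_sym.
    eapply Rle_trans; [apply (harmonic_path_bound f L m0 x w); assumption|].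
    apply Rmult_le_compat_r; [apply sqrt_pos|now apply le_INR]. }
  pose proof (abs_le_of_sum_lt_zero k (fun i => f (y i)) _ _ Hk Hsum Hclose) as Habs.
  assert (Hsq : f x ^ 2 <= INR L ^ 2 * (D / m0)).
  { rewrite <- pow2_abs, <- (pow2_sqrt (D / m0)) by (apply Rle_mult_inv_pos; assumption).
    rewrite <- Rpow_mult_distr; apply pow_incr; split; [apply Rabs_pos|exact Habs]. }
  assert (m0 / INR L ^ 2 * f x ^ 2 <= D).
  { apply Rle_trans with (m0 / INR L ^ 2 * (INR L ^ 2 * (D / m0))).
    - apply Rmult_le_compat_l; [left; apply Rdiv_lt_0_compat; [lra|apply pow_lt; lra]|exact Hsq].
    - right; field; lra. }
  unfold D in *; lra.
Qed.

Lemma FC_center_powers_reachable (gamma : G) (k : nat) :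
  nondegenerate mu -> in_FC_center gamma ->
  exists L m0, (0 < L)%nat /\ 0 < m0 /\
    forall x i, (i < k)%nat -> exists w, support_word mu w /\
      gmul (gpow gamma i) x = gmul x (prodw w) /\ (length w <= L)%nat /\ m0 <= word_weight mu w.
Proof.
  intros Hnondeg [conjugates Hconj].
  set (powers := flat_map (fun c => map (gpow c) (seq 0 k)) conjugates).
  destruct (exists_uniform_witnesses (fun y w => support_word mu w /\ y = prodw w)
              (@length G) (word_weight mu) powers) as [L [m0 [Hm0 Hwit]]].
  { intros y _; destruct (Hnondeg y) as [w [_ [Hw Hy]]].
    exists w; split; [now split|now apply word_weight_pos]. }
  exists (S L), m0; split; [lia|split; [exact Hm0|]].
  intros x i Hi.
  destruct (Hwit (gmul (ginv x) (gmul (gpow gamma i) x))) as [w [[Hw Hxw] [Hlen Hweight]]].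
  { rewrite conj_gpow; apply in_flat_map; eexists; split; [apply Hconj|].
    apply in_map, in_seq; lia. }
  exists w; repeat split; [exact Hw| |lia|exact Hweight].
  now rewrite <- Hxw, gassoc, ginv_r, gone_l.
Qed.

Lemma shift_diff_reverse_poincare (h : G -> R) (gamma : G) :
  nondegenerate mu -> harmonic mu supp h -> in_FC_center gamma -> finite_order gamma ->
  exists L a, (0 < L)%nat /\ 1 < a /\ forall y,
    a * (h (gmul gamma y) - h y) ^ 2
    <= markov_iter L (fun z => (h (gmul gamma z) - h z) ^ 2) y.
Proof.
  intros Hnondeg Hh HFC [k [Hk Hgk]].
  destruct (FC_center_powers_reachable gamma k Hnondeg HFC) as [L [m0 [HL [Hm0 Hpaths]]]].
  exists L, (1 + m0 / INR L ^ 2); split; [exact HL|split].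
  - assert (0 < m0 / INR L ^ 2) by (apply Rdiv_lt_0_compat; [lra|apply pow_lt, lt_0_INR; lia]).
    lra.
  - intros y; apply (reverse_poincare (fun z => h (gmul gamma z) - h z) k L m0 y
                           (fun i => gmul (gpow gamma i) y)); auto.
    + now apply harmonic_shift_diff.
    + now apply orbit_sum_shift_diff.
Qed.

End MarkovOperator.

Lemma subexp_not_geometric (M : nat -> R) (a q : R) (K T : nat) :
  (forall c, 0 < c -> Un_cv (fun n => exp (- c * INR n) * M n) 0) ->
  1 < a -> (0 < T)%nat ->
  (forall m, a ^ m * q <= M (K + m * T)%nat ^ 2) -> q <= 0.
Proof.
  intros Hsub Ha HT Hgeo; apply Rnot_lt_le; intros Hq.
  assert (HT' : 0 < INR T) by (apply lt_0_INR; exact HT).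
  assert (Hlna : 0 < ln a) by (rewrite <- ln_1; apply ln_increasing; lra).
  set (c := ln a / (2 * INR T)).
  assert (Hc : 0 < c) by (apply Rdiv_lt_0_compat; lra).
  set (v := fun n => exp (- c * INR n) * M n).
  assert (Hv2 : Un_cv (fun n => v n * v n) 0)
    by (rewrite <- (Rmult_0_l 0); apply CV_mult; apply Hsub; exact Hc).
  set (eps := exp (- (2 * c * INR K)) * q).
  assert (Heps : 0 < eps) by (apply Rmult_lt_0_compat; [apply exp_pos|exact Hq]).
  destruct (Hv2 eps Heps) as [m Hm].
  set (N := (K + m * T)%nat).
  specialize (Hm N ltac:(unfold N; nia)).
  unfold R_dist in Hm; rewrite Rminus_0_r in Hm.
  (* [c] is chosen so that [exp (2 c T) = a]. *)
  assert (Hexp : exp (- c * INR N) * exp (- c * INR N) * a ^ m = exp (- (2 * c * INR K))).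
  { rewrite <- Rpower_pow by lra; unfold Rpower; rewrite <- !exp_plus; f_equal.
    unfold N; rewrite plus_INR, mult_INR; unfold c; field; lra. }
  pose proof (Hgeo m) as Hm'; fold N in Hm'.
  pose proof (exp_pos (- c * INR N)) as He.
  assert (eps <= v N * v N).
  { unfold eps, v; rewrite <- Hexp.
    replace (exp (- c * INR N) * M N * (exp (- c * INR N) * M N))
      with (exp (- c * INR N) * exp (- c * INR N) * M N ^ 2) by ring.
    rewrite Rmult_assoc; apply Rmult_le_compat_l; nra. }
  pose proof (Rle_abs (v N * v N)); lra.
Qed.

Theorem proposition3p3 (G : Group) (S : list G) (mu : G -> R) (supp : list G)
  (h : G -> R) :
  generates S ->
  fin_prob mu supp -> symmetric_meas mu -> nondegenerate mu ->
  harmonic mu supp h -> subexp_growth S h ->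
  forall gamma : G, in_FC_center gamma -> finite_order gamma ->
  forall x : G, h (gmul gamma x) = h x.
Proof.
  intros Hgen [_ [mu_ge0 [supp_covers mu_mass1]]] _ Hnondeg Hh Hsub gamma HFC Hfin x.
  set (f := fun y => h (gmul gamma y) - h y).
  destruct (shift_diff_reverse_poincare mu supp mu_ge0 supp_covers mu_mass1 h gamma
              Hnondeg Hh HFC Hfin) as [L [a [HL [Ha Hpoincare]]]].
  destruct (generates_in_ball S supp Hgen) as [r Hsupp].
  destruct (generates_in_ball S [gamma; x] Hgen) as [n Hn].
  assert (Hgrowth : forall m, a ^ m * (f x ^ 2 / 4) <= Mh S h (n + n + m * (L * (r + 1)))%nat ^ 2).
  { intros m.
    pose proof (markov_iter_geometric mu supp mu_ge0 _ a L ltac:(lra) Hpoincare m x) as Hlower.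
    pose proof (markov_iter_shift_diff_sq_le_Mh mu supp mu_ge0 mu_mass1 S h gamma x (r + 1) n n
                  (m * L) ltac:(intros g Hg; apply in_ball_le with r; [lia|auto])
                  ltac:(apply Hn; simpl; auto) ltac:(apply Hn; simpl; auto)) as Hupper.
    replace (n + (n + m * L * (r + 1)))%nat with (n + n + m * (L * (r + 1)))%nat in Hupper by lia.
    unfold f; lra. }
  pose proof (subexp_not_geometric (Mh S h) a (f x ^ 2 / 4) (n + n) (L * (r + 1))
                Hsub Ha ltac:(nia) Hgrowth) as Hfx.
  assert (f x = 0) by nra.
  unfold f in *; lra.
Qed.
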